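(* Let $\mathcal R$ be a $Z$-regulus in $\mathcal G$ and let $L$ be a directrix of $\mathcal R$. Then the set of all points of $L$ which are contained in some element of $\mathcal R$ is a $Z$-subline of $L$.
   Context: $K$ is a (not necessarily commutative) field with centre $Z$, and $V$ is a left vector space over $K$ of arbitrary (possibly infinite) dimension with $\dim V>2$. $\mathcal G:=\{X\le V\mid X\cong V/X\}$, assumed nonempty. Points are $1$-dimensional and lines $2$-dimensional subspaces; two subspaces meet if they have a common point. $X,Y\in\mathcal G$ are distant if $V=X\oplus Y$. A $Z$-regulus is a subset $\mathcal R\subseteq\mathcal G$ such that (R1) its elements are mutually distant and $|\mathcal R|\ge3$; (R2) if a line meets three mutually distinct elements of $\mathcal R$ then it meets all elements of $\mathcal R$; (R3) $\mathcal R$ is not properly contained in any subset of $\mathcal G$ satisfying (R1) and (R2). A directrix of $\mathcal R$ is a line meeting all elements of $\mathcal R$. A $Z$-subline (or $Z$-chain) of a line $L$ is a set of points of the form $\{K(xa+yb)\mid (x,y)\in Z^2\setminus\{(0,0)\}\}$, where $a,b$ is a basis of $L$. *)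

From HB Require Import structures.
From mathcomp Require Import all_boot all_order all_algebra.
Set Implicit Arguments. Unset Strict Implicit. Unset Printing Implicit Defensive.
Import GRing.Theory.
Local Open Scope ring_scope.

Definition division_ring (K : unitRingType) : Prop :=
  forall x : K, x != 0 -> x \is a GRing.unit.

Section Geo.
Variables (K : unitRingType) (V : lmodType K).

Definition centre (z : K) : Prop := forall k : K, z * k = k * z.

Definition subspace (X : V -> Prop) : Prop :=
  X 0 /\ (forall u v, X u -> X v -> X (u + v)) /\ (forall (k : K) v, X v -> X (k *: v)).

Definition subsp (X Y : V -> Prop) : Prop := forall v, X v -> Y v.

Definition span1 (v : V) : V -> Prop := fun w => exists k : K, w = k *: v.

Definition lin_indep2 (a b : V) : Prop :=
  forall x y : K, x *: a + y *: b = 0 -> x = 0 /\ y = 0.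

Definition lin_indep3 (a b c : V) : Prop :=
  forall x y z : K, x *: a + y *: b + z *: c = 0 -> [/\ x = 0, y = 0 & z = 0].

Definition dim_gt2 : Prop := exists a b c : V, lin_indep3 a b c.

Definition basis2 (a b : V) (L : V -> Prop) : Prop :=
  lin_indep2 a b /\ forall w, L w <-> exists x y : K, w = x *: a + y *: b.

Definition point (P : V -> Prop) : Prop :=
  exists v : V, v <> 0 /\ forall w, P w <-> span1 v w.

Definition line (L : V -> Prop) : Prop := exists a b : V, basis2 a b L.

Definition meet (X Y : V -> Prop) : Prop := exists v : V, v <> 0 /\ X v /\ Y v.

Definition linear_map (f : V -> V) : Prop :=
  (forall u v, f (u + v) = f u + f v) /\ (forall (k : K) v, f (k *: v) = k *: f v).

(* X is isomorphic to V/X: by the first isomorphism theorem, a linear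
   isomorphism V/X -> X is the same as a linear map V -> V with image X
   and kernel X. *)
Definition iso_quot (X : V -> Prop) : Prop :=
  exists f : V -> V, linear_map f /\
    (forall v, X (f v)) /\ (forall x, X x -> exists v, f v = x) /\
    (forall v, f v = 0 <-> X v).

Definition inG (X : V -> Prop) : Prop := subspace X /\ iso_quot X.

Definition distant (X Y : V -> Prop) : Prop :=
  (forall v, X v -> Y v -> v = 0) /\ (forall v, exists x y, X x /\ Y y /\ v = x + y).

Definition R1 (S : (V -> Prop) -> Prop) : Prop :=
  (forall X Y, S X -> S Y -> X <> Y -> distant X Y) /\
  (exists X Y W, [/\ S X, S Y, S W & X <> Y /\ X <> W /\ Y <> W]).

Definition R2 (S : (V -> Prop) -> Prop) : Prop :=
  forall L, line L ->
    (exists X Y W, [/\ S X, S Y, S W, X <> Y /\ X <> W /\ Y <> W &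
                     meet L X /\ meet L Y /\ meet L W]) ->
    forall X, S X -> meet L X.

Definition Zregulus (R : (V -> Prop) -> Prop) : Prop :=
  (forall X, R X -> inG X) /\ R1 R /\ R2 R /\
  (forall S : (V -> Prop) -> Prop,
     (forall X, S X -> inG X) -> R1 S -> R2 S ->
     (forall X, R X -> S X) -> forall X, S X -> R X).

Definition directrix (R : (V -> Prop) -> Prop) (L : V -> Prop) : Prop :=
  line L /\ forall X, R X -> meet L X.

Definition Zsubline (L : V -> Prop) (S : (V -> Prop) -> Prop) : Prop :=
  exists a b : V, basis2 a b L /\
    forall P, S P <->
      exists x y : K, [/\ centre x, centre y, (x, y) <> (0, 0) &
                        forall w, P w <-> span1 (x *: a + y *: b) w].

End Geo.

(* Fix three elements X, Y, W of the regulus. Then V = X (+) Y and W is the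
   graph {x + phi x | x in X} of a linear isomorphism phi : X -> Y. Any other
   element T is distant from Y and, by (R2), meets every line <x, phi x>, which
   already meets X, Y and W; so T contains some x + m phi x, and comparing
   independent vectors (here dim V > 2 is used) shows that m does not depend on
   x and is central: T is the graph G mu of mu phi with mu in Z. Conversely Y
   and the G mu (mu in Z) satisfy (R1) and (R2) -- a line meeting three of them
   contains some x in X and phi x -- so by maximality they form the regulus. A
   directrix L meets X in some a and then contains phi a, so its points on the
   regulus are K phi a and the K (a + mu phi a), mu in Z: the Z-subline of L
   with respect to the basis a, phi a. *)

From mathcomp Require Import all_boot all_algebra.
From Stdlib Require Import ClassicalEpsilon FunctionalExtensionality PropExtensionality.
Set Implicit Arguments. Unset Strict Implicit. Unset Printing Implicit Defensive.
Import GRing.Theory.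
Local Open Scope ring_scope.

Section DivisionRing.
Variable K : unitRingType.
Hypothesis hK : division_ring K.

Lemma dr_mulVf (x : K) : x != 0 -> x^-1 * x = 1.
Proof. by move=> /hK; apply: mulVr. Qed.

Lemma dr_mulfV (x : K) : x != 0 -> x * x^-1 = 1.
Proof. by move=> /hK; apply: mulrV. Qed.

Lemma dr_mulf_eq0 (a b : K) : (a * b == 0) = (a == 0) || (b == 0).
Proof.
apply/idP/idP => [/eqP ab0 | /orP[] /eqP ->]; rewrite ?mul0r ?mulr0 //.
apply/negPn/norP => -[/hK ua /hK ub].
by move: (unitrMr b ua); rewrite ab0 unitr0 ub.
Qed.

Lemma centre0 : centre (0 : K).
Proof. by move=> k; rewrite mul0r mulr0. Qed.

Lemma centre1 : centre (1 : K).
Proof. by move=> k; rewrite mul1r mulr1. Qed.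

Lemma centreM (a b : K) : centre a -> centre b -> centre (a * b).
Proof. by move=> ha hb k; rewrite -mulrA hb mulrA ha mulrA. Qed.

Lemma centreV (a : K) : a != 0 -> centre a -> centre a^-1.
Proof.
move=> a0 ha k; have e : a^-1 * k * a = k by rewrite -mulrA -ha mulrA dr_mulVf // mul1r.
by rewrite -[LHS]mulr1 -(dr_mulfV a0) mulrA e.
Qed.

Lemma two_eqs_three_unknowns (a1 b1 c1 a2 b2 c2 : K) :
  exists a b c : K, (a != 0 \/ b != 0 \/ c != 0) /\
    a * a1 + b * b1 + c * c1 = 0 /\ a * a2 + b * b2 + c * c2 = 0.
Proof.
wlog c1_neq0 : a1 b1 c1 a2 b2 c2 / c1 != 0 => [gen|].
  have [c1_0|] := eqVneq c1 0; last exact: gen.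
  have [c2_0|c2_neq0] := eqVneq c2 0.
    exists 0, 0, 1; split; first by right; right; apply: oner_neq0.
    by rewrite c1_0 c2_0 !mul0r !mulr0 !addr0.
  by have [a [b [c [? [? ?]]]]] := gen a2 b2 c2 a1 b1 c1 c2_neq0; exists a, b, c.
set p := a2 - a1 * c1^-1 * c2; set q := b2 - b1 * c1^-1 * c2.
have [a [b [ab_neq0 eq_ab]]] : exists a b : K, (a != 0 \/ b != 0) /\ a * p + b * q = 0.
  have [p0|p_neq0] := eqVneq p 0.
    exists 1, 0; split; first by left; apply: oner_neq0.
    by rewrite p0 mulr0 mul0r addr0.
  exists (- (q * p^-1)), 1; split; first by right; apply: oner_neq0.
  by rewrite mulNr -mulrA dr_mulVf // mulr1 mul1r addNr.
exists a, b, (- (a * a1 + b * b1) * c1^-1); split.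
  by case: ab_neq0 => h; [left | right; left].
split; first by rewrite !mulNr -mulrA dr_mulVf // mulr1 subrr.
rewrite -eq_ab /p /q mulrBr mulrBr !mulNr !mulrDl !mulrA opprD !addrA.
by congr (_ + _); rewrite -!addrA; congr (_ + _); rewrite addrC.
Qed.

End DivisionRing.

Section Module.
Variables (K : unitRingType) (V : lmodType K).
Hypothesis hK : division_ring K.

Lemma dr_scalerK (k : K) : k != 0 -> cancel ( *:%R k : V -> V) ( *:%R k^-1).
Proof. by move=> k0 v; rewrite scalerA dr_mulVf // scale1r. Qed.

Lemma dr_scaler_eq0_vec (k : K) (v : V) : k != 0 -> k *: v = 0 -> v = 0.
Proof. by move=> k0 e; rewrite -(dr_scalerK k0 v) e scaler0. Qed.

Lemma dr_scaler_eq0_coef (k : K) (v : V) : v <> 0 -> k *: v = 0 -> k = 0.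
Proof. by move=> v0 e; apply/eqP/negPn/negP => k0; apply: v0; apply: dr_scaler_eq0_vec e. Qed.

Lemma dr_scaler_inj_coef (k k' : K) (v : V) : v <> 0 -> k *: v = k' *: v -> k = k'.
Proof.
move=> v0 e; apply/subr0_eq/(dr_scaler_eq0_coef v0).
by rewrite scalerBl e subrr.
Qed.

Lemma dr_lincomb_eq0 (c d : K) (u v : V) :
  c != 0 -> c *: u + d *: v = 0 -> u = - (c^-1 * d) *: v.
Proof.
move=> c0 /eqP; rewrite addr_eq0 => /eqP e.
by rewrite -(dr_scalerK c0 u) e scalerN scalerA scaleNr.
Qed.

Lemma subspace0 (X : V -> Prop) : subspace X -> X 0.
Proof. by case. Qed.

Lemma subspaceD (X : V -> Prop) u v : subspace X -> X u -> X v -> X (u + v).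
Proof. by case=> _ [h _]; apply: h. Qed.

Lemma subspaceZ (X : V -> Prop) (k : K) v : subspace X -> X v -> X (k *: v).
Proof. by case=> _ [_ h]; apply: h. Qed.

Lemma subspaceN (X : V -> Prop) v : subspace X -> X v -> X (- v).
Proof. by move=> sX Xv; rewrite -scaleN1r; apply: subspaceZ. Qed.

Lemma subspaceB (X : V -> Prop) u v : subspace X -> X u -> X v -> X (u - v).
Proof. by move=> sX Xu Xv; apply: subspaceD => //; apply: subspaceN. Qed.

Lemma dr_subspaceZ_inv (X : V -> Prop) (k : K) v :
  subspace X -> k != 0 -> X (k *: v) -> X v.
Proof. by move=> sX k0 /(subspaceZ k^-1 sX); rewrite dr_scalerK. Qed.

Definition span2 (a b : V) : V -> Prop := fun w => exists s t : K, w = s *: a + t *: b.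

Lemma basis2_subspace (a b : V) L : basis2 a b L -> subspace L.
Proof.
case=> _ hL; split; [|split].
- by apply/hL; exists 0, 0; rewrite !scale0r addr0.
- move=> u v /hL [s [t ->]] /hL [s' [t' ->]]; apply/hL; exists (s + s'), (t + t').
  by rewrite !scalerDl addrACA.
- move=> k v /hL [s [t ->]]; apply/hL; exists (k * s), (k * t).
  by rewrite scalerDr !scalerA.
Qed.

Lemma basis2_dependent3 (a b : V) L u v w : basis2 a b L -> L u -> L v -> L w ->
  exists x y z : K, (x != 0 \/ y != 0 \/ z != 0) /\ x *: u + y *: v + z *: w = 0.
Proof.
case=> _ hL /hL [u1 [u2 ->]] /hL [v1 [v2 ->]] /hL [w1 [w2 ->]].
have [x [y [z [xyz_neq0 [e1 e2]]]]] := two_eqs_three_unknowns hK u1 v1 w1 u2 v2 w2.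
exists x, y, z; split => //.
rewrite !scalerDr !scalerA (addrACA ((x * u1) *: a)) [LHS]addrACA.
by rewrite -!scalerDl e1 e2 !scale0r addr0.
Qed.

Lemma lin_indep2_neq0r (a b : V) : lin_indep2 a b -> b <> 0.
Proof.
move=> hab b0; have [_ /eqP] : (0 : K) = 0 /\ (1 : K) = 0.
  by apply: hab; rewrite b0 scaler0 scale0r addr0.
by rewrite oner_eq0.
Qed.

Lemma lin_indep2_addr_neq0 (a b : V) : lin_indep2 a b -> a + b <> 0.
Proof.
move=> hab ab0; have [/eqP] : (1 : K) = 0 /\ (1 : K) = 0 by apply: hab; rewrite !scale1r.
by rewrite oner_eq0.
Qed.

Lemma not_lin_indep2 (u z : V) : u <> 0 -> ~ lin_indep2 u z -> exists k, z = k *: u.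
Proof.
move=> u0 dep; apply: NNPP => not_mult; apply: dep => s t e.
have [t0|t_neq0] := eqVneq t 0.
  by move: e; rewrite t0 scale0r addr0 => /(dr_scaler_eq0_coef u0).
by case: not_mult; exists (- (t^-1 * s)); apply: dr_lincomb_eq0 t_neq0 _; rewrite addrC.
Qed.

Lemma basis2_of_lin_indep2 (a b : V) L u v : basis2 a b L -> L u -> L v ->
  lin_indep2 u v -> basis2 u v L.
Proof.
move=> hB Lu Lv huv; split => // w; split; last first.
  by case=> s [t ->]; have sL := basis2_subspace hB; apply: (subspaceD sL); apply: subspaceZ.
move=> Lw; have [x [y [z [xyz_neq0 e]]]] := basis2_dependent3 hB Lw Lu Lv.
have [x0|x_neq0] := eqVneq x 0.
  move: e; rewrite x0 scale0r add0r => /huv [y0 z0].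
  by case: xyz_neq0 => [|[]] /eqP; [rewrite x0 | rewrite y0 | rewrite z0].
exists (- (x^-1 * y)), (- (x^-1 * z)).
move: e; rewrite -addrA -[y *: u + _]scale1r => /(dr_lincomb_eq0 x_neq0) ->.
by rewrite mulr1 scalerDr !scalerA -!mulNr.
Qed.

Lemma span1Z (v : V) (k : K) : k != 0 -> forall w, span1 (k *: v) w <-> span1 v w.
Proof.
move=> k0 w; split; case=> c ->; first by exists (c * k); rewrite scalerA.
by exists (c * k^-1); rewrite scalerA -mulrA dr_mulVf // mulr1.
Qed.

End Module.

Lemma distantC (K : unitRingType) (V : lmodType K) (A B : V -> Prop) :
  distant A B -> distant B A.
Proof.
case=> AB0 AB; split; first by move=> v Bv Av; apply: AB0.
by move=> v; have [x [y [Ax [By ->]]]] := AB v; exists y, x; rewrite addrC.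
Qed.

Section Frame.
Variables (K : unitRingType) (V : lmodType K).
Hypothesis hK : division_ring K.
Variables X Y W : V -> Prop.
Hypotheses (sX : subspace X) (sY : subspace Y) (sW : subspace W).
Hypotheses (XY0 : forall v, X v -> Y v -> v = 0) (WY0 : forall v, W v -> Y v -> v = 0).
Hypothesis dWX : distant W X.

Variables pX phi : V -> V.
Hypothesis pX_spec : forall v, X (pX v) /\ Y (v - pX v).
Hypothesis phi_spec : forall v, Y (phi v) /\ W (pX v + phi v).

Lemma pX_in v : X (pX v). Proof. by case: (pX_spec v). Qed.
Lemma pX_compl v : Y (v - pX v). Proof. by case: (pX_spec v). Qed.
Lemma phi_in v : Y (phi v). Proof. by case: (phi_spec v). Qed.
Lemma phi_graph v : W (pX v + phi v). Proof. by case: (phi_spec v). Qed.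

Lemma pX_unique v x : X x -> Y (v - x) -> pX v = x.
Proof.
move=> Xx Yvx; apply/subr0_eq/XY0; first by apply: subspaceB => //; apply: pX_in.
have -> : pX v - x = (v - x) - (v - pX v) by rewrite opprB [RHS]addrC addrA subrK.
by apply: subspaceB => //; apply: pX_compl.
Qed.

Lemma pXD u v : pX (u + v) = pX u + pX v.
Proof.
apply: pX_unique; first by apply: subspaceD => //; apply: pX_in.
by rewrite opprD addrACA; apply: subspaceD => //; apply: pX_compl.
Qed.

Lemma pXZ (k : K) v : pX (k *: v) = k *: pX v.
Proof.
apply: pX_unique; first by apply: subspaceZ => //; apply: pX_in.
by rewrite -scalerBr; apply: subspaceZ => //; apply: pX_compl.
Qed.

Lemma pXB u v : pX (u - v) = pX u - pX v.
Proof. by rewrite pXD -scaleN1r pXZ scaleN1r. Qed.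

Lemma pX_id x : X x -> pX x = x.
Proof. by move=> Xx; apply: pX_unique => //; rewrite subrr; apply: subspace0. Qed.

Lemma pX_eq0 y : Y y -> pX y = 0.
Proof. by move=> Yy; apply: pX_unique; [apply: subspace0 | rewrite subr0]. Qed.

Lemma pX0 : pX 0 = 0. Proof. exact: pX_eq0 (subspace0 sY). Qed.

Lemma pX_idem v : pX (pX v) = pX v. Proof. exact: pX_id (pX_in v). Qed.

Lemma pX_phi v : pX (phi v) = 0. Proof. exact: pX_eq0 (phi_in v). Qed.

Lemma in_X v : X v <-> pX v = v.
Proof. by split => [/pX_id | <-] //; apply: pX_in. Qed.

Lemma phi_unique v y : Y y -> W (pX v + y) -> phi v = y.
Proof.
move=> Yy Wvy; apply/subr0_eq/WY0; last by apply: subspaceB => //; apply: phi_in.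
have -> : phi v - y = (pX v + phi v) - (pX v + y) by rewrite opprD addrACA subrr add0r.
by apply: subspaceB => //; apply: phi_graph.
Qed.

Lemma phiD u v : phi (u + v) = phi u + phi v.
Proof.
apply: phi_unique; first by apply: subspaceD => //; apply: phi_in.
by rewrite pXD addrACA; apply: subspaceD => //; apply: phi_graph.
Qed.

Lemma phiZ (k : K) v : phi (k *: v) = k *: phi v.
Proof.
apply: phi_unique; first by apply: subspaceZ => //; apply: phi_in.
by rewrite pXZ -scalerDr; apply: subspaceZ => //; apply: phi_graph.
Qed.

Lemma phiB u v : phi (u - v) = phi u - phi v.
Proof. by rewrite phiD -scaleN1r phiZ scaleN1r. Qed.

Lemma phi_pX v : phi (pX v) = phi v.
Proof. by apply: phi_unique; [apply: phi_in | rewrite pX_idem; apply: phi_graph]. Qed.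

Lemma phi_eq0 y : Y y -> phi y = 0.
Proof.
move=> Yy; apply: phi_unique; first exact: subspace0.
by rewrite pX_eq0 // addr0; apply: subspace0.
Qed.

Lemma phi0 : phi 0 = 0. Proof. exact: phi_eq0 (subspace0 sY). Qed.

Lemma phi_phi v : phi (phi v) = 0. Proof. exact: phi_eq0 (phi_in v). Qed.

Lemma phi_inj x : X x -> phi x = 0 -> x = 0.
Proof.
move=> Xx phix0; case: dWX => WX0 _; apply: WX0 => //.
by have := phi_graph x; rewrite phix0 addr0 pX_id.
Qed.

Lemma phi_neq0 x : X x -> x <> 0 -> phi x <> 0.
Proof. by move=> Xx x0 /(phi_inj Xx). Qed.

Lemma phi_surj y : Y y -> exists2 x, X x & phi x = y.
Proof.
move=> Yy; case: dWX => _ /(_ y) [w [x [Ww [Xx e]]]].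
exists (- x); first exact: subspaceN.
apply: phi_unique => //; rewrite pX_id; last exact: subspaceN.
by rewrite e [w + x]addrC addKr.
Qed.

Lemma in_W v : W v <-> v - pX v = phi v.
Proof.
split => [Wv | e]; last by have := phi_graph v; rewrite -e addrC subrK.
by symmetry; apply: phi_unique; [apply: pX_compl | rewrite addrC subrK].
Qed.

Lemma pX_decomp v : v = pX v + (v - pX v). Proof. by rewrite addrC subrK. Qed.

(* The graph {x + mu phi x | x in X}; thus X = G 0 and W = G 1. *)
Definition G (mu : K) : V -> Prop := fun v => v - pX v = mu *: phi v.

Lemma G_subspace mu : centre mu -> subspace (G mu).
Proof.
move=> hmu; split; [|split].
- by rewrite /G pX0 phi0 subr0 scaler0.
- by move=> u v; rewrite /G pXD opprD addrACA phiD scalerDr => -> ->.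
- by move=> k v; rewrite /G pXZ -scalerBr phiZ => ->; rewrite !scalerA hmu.
Qed.

Lemma G_graph mu x : X x -> G mu (x + mu *: phi x).
Proof.
move=> Xx; rewrite /G pXD pXZ pX_phi scaler0 addr0 pX_id // addrAC subrr add0r.
by rewrite phiD phiZ phi_phi scaler0 addr0.
Qed.

Lemma G_decomp mu g : G mu g -> g = pX g + mu *: phi (pX g).
Proof. by move=> e; rewrite phi_pX -e addrC subrK. Qed.

Lemma G_pX_neq0 mu g : G mu g -> g <> 0 -> pX g <> 0.
Proof. by move=> Gg g0 e; apply: g0; rewrite (G_decomp Gg) e phi0 scaler0 addr0. Qed.

Lemma distant_YG mu : centre mu -> distant Y (G mu).
Proof.
move=> hmu; split.
  by move=> v Yv; rewrite /G -phi_pX pX_eq0 // phi0 scaler0 subr0.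
move=> v; exists (v - pX v - mu *: phi v), (pX v + mu *: phi v); split.
  by apply: subspaceB => //; [apply: pX_compl | apply: subspaceZ => //; apply: phi_in].
split; first by rewrite -phi_pX; apply/G_graph/pX_in.
by rewrite -[v - pX v - _]addrA -opprD subrK.
Qed.

Lemma distant_GG mu nu : centre mu -> centre nu -> mu != nu -> distant (G mu) (G nu).
Proof.
move=> hmu hnu mu_nu; have c_neq0 : mu - nu != 0 by rewrite subr_eq0.
split.
  move=> v Gmu Gnu.
  have phiv0 : phi v = 0.
    by apply: (dr_scaler_eq0_vec hK c_neq0); rewrite scalerBl -Gmu -Gnu subrr.
  have pXv0 : pX v = 0 by apply: phi_inj; rewrite ?phi_pX //; apply: pX_in.
  by move: Gmu; rewrite /G pXv0 phiv0 scaler0 subr0.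
(* v = x1 + mu phi x1 + x2 + nu phi x2 with x1 + x2 = pX v and
   mu x1 + nu x2 the preimage under phi of v - pX v *)
move=> v; have [z Xz phiz] := phi_surj (pX_compl v).
set x1 := (mu - nu)^-1 *: (z - nu *: pX v); set x2 := pX v - x1.
have Xx1 : X x1.
  by apply: subspaceZ => //; apply: subspaceB => //; apply: subspaceZ => //; apply: pX_in.
have Xx2 : X x2 by apply: subspaceB => //; apply: pX_in.
exists (x1 + mu *: phi x1), (x2 + nu *: phi x2); split; first exact: G_graph.
split; first exact: G_graph.
have combz : mu *: x1 + nu *: x2 = z.
  rewrite /x2 scalerBr addrCA -scalerBl /x1 scalerA dr_mulfV // scale1r.
  by rewrite addrC subrK.
by rewrite addrACA /x2 [x1 + _]addrC subrK -!phiZ -phiD combz phiz -pX_decomp.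
Qed.

Lemma G_inG mu : centre mu -> inG X -> inG (G mu).
Proof.
move=> hmu [_ [f [[fD fZ] [fX [f_onto f_ker]]]]].
split; first exact: G_subspace.
(* conjugate f by the shear v |-> v + mu phi v, which maps X onto G mu *)
pose A v := v + mu *: phi v; pose B v := v - mu *: phi v.
have AB v : A (B v) = v by rewrite /A /B phiB phiZ phi_phi scaler0 subr0 subrK.
have BA v : B (A v) = v by rewrite /A /B phiD phiZ phi_phi scaler0 addr0 addrK.
have AD u v : A (u + v) = A u + A v by rewrite /A phiD scalerDr addrACA.
have AZ (k : K) v : A (k *: v) = k *: A v.
  by rewrite /A phiZ scalerDr !scalerA hmu.
have BD u v : B (u + v) = B u + B v by rewrite /B phiD scalerDr opprD addrACA.
have BZ (k : K) v : B (k *: v) = k *: B v.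
  by rewrite /B phiZ scalerBr !scalerA hmu.
have pX_B v : pX (B v) = pX v by rewrite /B pXB pXZ pX_phi scaler0 subr0.
exists (fun v => A (f (B v))); split; [split|split; [|split]].
- by move=> u v; rewrite BD fD AD.
- by move=> k v; rewrite BZ fZ AZ.
- by move=> v; apply/G_graph/fX.
- move=> g Gg; have [w fw] := f_onto _ (pX_in g).
  by exists (A w); rewrite BA fw /A -(G_decomp Gg).
- move=> v; split.
  + move=> /(congr1 B); rewrite BA /B phi0 scaler0 subr0 => /f_ker /in_X.
    by rewrite pX_B /B => e; rewrite /G e opprB addrC subrK.
  + move=> Gv; have /f_ker -> : X (B v).
      by apply/in_X; rewrite pX_B /B -Gv opprB addrC subrK.
    by rewrite /A phi0 scaler0 addr0.
Qed.

Lemma G_sub_same_pX l l' g g' : G l g -> G l' g' -> pX g = pX g' ->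
  g - g' = (l - l') *: phi (pX g).
Proof.
move=> Gg Gg' e; rewrite [in LHS](G_decomp Gg) [in LHS](G_decomp Gg') -e.
by rewrite opprD addrACA subrr add0r scalerBl.
Qed.

Lemma G_pX_in_line M l q : subspace M -> G l q -> M q -> M (phi (pX q)) -> M (pX q).
Proof.
move=> sM Gq Mq Mphi; have -> : pX q = q - l *: phi (pX q) by rewrite {2}(G_decomp Gq) addrK.
by apply: subspaceB => //; apply: subspaceZ.
Qed.

(* Applying [dev l] to a linear relation kills its terms lying in [G l]. *)
Definition dev (l : K) (v : V) : V := v - pX v - l *: phi v.

Lemma devD l u v : dev l (u + v) = dev l u + dev l v.
Proof. by rewrite /dev pXD phiD scalerDr opprD addrACA opprD [LHS]addrACA. Qed.

Lemma devZ l (k : K) v : centre l -> dev l (k *: v) = k *: dev l v.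
Proof. by move=> hl; rewrite /dev pXZ phiZ !scalerBr !scalerA hl. Qed.

Lemma dev0 l : dev l 0 = 0.
Proof. by rewrite /dev pX0 phi0 scaler0 !subr0. Qed.

Lemma dev_G l l' g : G l' g -> dev l g = (l' - l) *: phi (pX g).
Proof. by move=> Gg; rewrite /dev Gg phi_pX scalerBl. Qed.

Lemma dev_Y l y : Y y -> dev l y = y.
Proof. by move=> Yy; rewrite /dev pX_eq0 // phi_eq0 // scaler0 !subr0. Qed.

Lemma line_GGG_phi M e1 e2 l1 l2 l3 p q r : basis2 e1 e2 M ->
  centre l1 -> centre l2 -> centre l3 -> l1 != l2 -> l1 != l3 -> l2 != l3 ->
  M p -> M q -> M r -> p <> 0 -> q <> 0 -> r <> 0 ->
  G l1 p -> G l2 q -> G l3 r -> M (phi (pX q)).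
Proof.
move=> hB c1 c2 c3 n12 n13 n23 Mp Mq Mr p0 q0 r0 Gp Gq Gr.
have sM := basis2_subspace hB.
have [a [b [c [abc_neq0 dep]]]] := basis2_dependent3 hK hB Mp Mq Mr.
set u := pX p; set v := pX q; set w := pX r.
have u0 := G_pX_neq0 Gp p0; have v0 := G_pX_neq0 Gq q0; have w0 := G_pX_neq0 Gr r0.
have depX : a *: u + b *: v + c *: w = 0 by move: (congr1 pX dep); rewrite !pXD !pXZ pX0.
have depY : (a * (l1 - l3)) *: u + (b * (l2 - l3)) *: v = 0.
  apply: phi_inj; first by apply: subspaceD => //; apply: subspaceZ => //; apply: pX_in.
  move: (congr1 (dev l3) dep); rewrite !devD !devZ // (dev_G _ Gp) (dev_G _ Gq) (dev_G _ Gr).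
  by rewrite subrr scale0r scaler0 addr0 dev0 phiD !phiZ !scalerA.
have [a0|a_neq0] := eqVneq a 0.
  exfalso; move: depY; rewrite a0 mul0r scale0r add0r => /(dr_scaler_eq0_coef hK v0) /eqP.
  rewrite dr_mulf_eq0 // subr_eq0 (negbTE n23) orbF => /eqP b0.
  move: depX; rewrite a0 b0 !scale0r !add0r => /(dr_scaler_eq0_coef hK w0) c0.
  by case: abc_neq0 => [|[]] /eqP; [rewrite a0 | rewrite b0 | rewrite c0].
have lin_neq0 : a * (l1 - l3) != 0 by rewrite dr_mulf_eq0 // negb_or a_neq0 subr_eq0.
(* u = k v, so k^-1 p and q are points of M over the same v, and they differ by
   (l1 - l2) phi v *)
set k := - ((a * (l1 - l3))^-1 * (b * (l2 - l3))).
have eu : u = k *: v := dr_lincomb_eq0 hK lin_neq0 depY.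
have k_neq0 : k != 0 by apply/eqP => k0; move: u0; rewrite -/u eu k0 scale0r.
have Gp' : G l1 (k^-1 *: p) by apply: subspaceZ => //; apply: G_subspace.
have pXp' : pX (k^-1 *: p) = v by rewrite pXZ -/u eu dr_scalerK.
apply: (dr_subspaceZ_inv hK sM (_ : l1 - l2 != 0)); first by rewrite subr_eq0.
rewrite -[in phi v]pXp' -(G_sub_same_pX Gp' Gq pXp').
by apply: subspaceB => //; apply: subspaceZ.
Qed.

Lemma line_YGG_phi M e1 e2 l1 l2 y q r : basis2 e1 e2 M ->
  centre l1 -> centre l2 -> l1 != l2 ->
  M y -> M q -> M r -> y <> 0 -> q <> 0 -> r <> 0 ->
  Y y -> G l1 q -> G l2 r -> M (phi (pX q)).
Proof.
move=> hB c1 c2 n12 My Mq Mr y0 q0 r0 Yy Gq Gr.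
have sM := basis2_subspace hB.
have [a [b [c [abc_neq0 dep]]]] := basis2_dependent3 hK hB My Mq Mr.
set v := pX q; set w := pX r.
have v0 := G_pX_neq0 Gq q0; have w0 := G_pX_neq0 Gr r0.
have depX : b *: v + c *: w = 0.
  by move: (congr1 pX dep); rewrite !pXD !pXZ pX_eq0 // scaler0 add0r pX0.
have depY : (b * (l1 - l2)) *: phi v + a *: y = 0.
  move: (congr1 (dev l2) dep); rewrite !devD !devZ // (dev_Y _ Yy) (dev_G _ Gq) (dev_G _ Gr).
  by rewrite subrr scale0r scaler0 addr0 dev0 scalerA addrC.
have [b0|b_neq0] := eqVneq b 0.
  exfalso; move: depX; rewrite b0 scale0r add0r => /(dr_scaler_eq0_coef hK w0) c0.
  move: depY; rewrite b0 mul0r scale0r add0r => /(dr_scaler_eq0_coef hK y0) a0.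
  by case: abc_neq0 => [|[]] /eqP; [rewrite a0 | rewrite b0 | rewrite c0].
have lin_neq0 : b * (l1 - l2) != 0 by rewrite dr_mulf_eq0 // negb_or b_neq0 subr_eq0.
by rewrite (dr_lincomb_eq0 hK lin_neq0 depY); apply: subspaceZ.
Qed.

Definition std_regulus (T : V -> Prop) : Prop :=
  T = Y \/ exists2 mu, centre mu & T = G mu.

Lemma std_regulus_subspace T : std_regulus T -> subspace T.
Proof. by case=> [->|[mu hmu ->]] //; apply: G_subspace. Qed.

Lemma std_regulus_distant T1 T2 :
  std_regulus T1 -> std_regulus T2 -> T1 <> T2 -> distant T1 T2.
Proof.
case=> [->|[mu hmu ->]] [->|[nu hnu ->]] // neq.
- exact: distant_YG.
- exact/distantC/distant_YG.
- by apply: distant_GG => //; apply/eqP => e; apply: neq; rewrite e.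
Qed.

Lemma std_regulus_meet M x : subspace M -> X x -> x <> 0 -> M x -> M (phi x) ->
  forall T, std_regulus T -> meet M T.
Proof.
move=> sM Xx x0 Mx Mphi T [->|[mu hmu ->]].
  by exists (phi x); split; [exact: phi_neq0 | split => //; apply: phi_in].
exists (x + mu *: phi x); split; last first.
  by split; [apply: subspaceD => //; apply: subspaceZ | apply: G_graph].
by move=> /(congr1 pX); rewrite pXD pXZ pX_phi scaler0 addr0 pX_id // pX0.
Qed.

Lemma std_regulus_R2 : R2 std_regulus.
Proof.
move=> M [e1 [e2 hB]] [T1 [T2 [T3 [S1 S2 S3 [n12 [n13 n23]] [m1 [m2 m3]]]]]] T ST.
have sM := basis2_subspace hB.
suff [l [q [Gq Mq q0 Mphi]]] : exists l q, [/\ G l q, M q, q <> 0 & M (phi (pX q))].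
  apply: (std_regulus_meet sM (pX_in q) (G_pX_neq0 Gq q0)) => //.
  exact: G_pX_in_line sM Gq Mq Mphi.
have slope_neq mu nu : G mu <> G nu -> mu != nu by move=> ne; apply/eqP => e; apply: ne; rewrite e.
move: S1 S2 S3 n12 n13 n23 m1 m2 m3.
case=> [->|[l1 c1 ->]]; case=> [->|[l2 c2 ->]]; case=> [->|[l3 c3 ->]] // n12 n13 n23
  [p [p0 [Mp Tp]]] [q [q0 [Mq Tq]]] [r [r0 [Mr Tr]]].
- exists l2, q; split => //.
  exact: line_YGG_phi hB c2 c3 (slope_neq _ _ n23) Mp Mq Mr p0 q0 r0 Tp Tq Tr.
- exists l1, p; split => //.
  exact: line_YGG_phi hB c1 c3 (slope_neq _ _ n13) Mq Mp Mr q0 p0 r0 Tq Tp Tr.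
- exists l1, p; split => //.
  exact: line_YGG_phi hB c1 c2 (slope_neq _ _ n12) Mr Mp Mq r0 p0 q0 Tr Tp Tq.
- exists l2, q; split => //.
  exact: line_GGG_phi hB c1 c2 c3 (slope_neq _ _ n12) (slope_neq _ _ n13)
    (slope_neq _ _ n23) Mp Mq Mr p0 q0 r0 Tp Tq Tr.
Qed.

Lemma lin_indep2_phi x : X x -> x <> 0 -> lin_indep2 x (phi x).
Proof.
move=> Xx x0 s t e.
have s0 : s = 0.
  apply: (dr_scaler_eq0_coef hK x0).
  by move: (congr1 pX e); rewrite pXD !pXZ pX_phi pX_id // scaler0 addr0 pX0.
split => //; move: e; rewrite s0 scale0r add0r.
exact: dr_scaler_eq0_coef (phi_neq0 Xx x0).
Qed.

Lemma span2_phi_meets x : X x -> x <> 0 -> [/\ meet (span2 x (phi x)) X,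
  meet (span2 x (phi x)) Y & meet (span2 x (phi x)) W].
Proof.
move=> Xx x0; split.
- by exists x; split => //; split => //; exists 1, 0; rewrite scale1r scale0r addr0.
- exists (phi x); split; first exact: phi_neq0.
  by split; [exists 0, 1; rewrite scale1r scale0r add0r | apply: phi_in].
- exists (x + phi x); split.
    by move=> /(congr1 pX); rewrite pXD pX_phi addr0 pX_id // pX0.
  split; first by exists 1, 1; rewrite !scale1r.
  by have := phi_graph x; rewrite pX_id.
Qed.

Lemma line_XYW_phi L e1 e2 a b c : basis2 e1 e2 L -> L a -> L b -> L c ->
  X a -> a <> 0 -> Y b -> b <> 0 -> W c -> c <> 0 -> L (phi a).
Proof.
move=> hB La Lb Lc Xa a0 Yb b0 Wc c0; have sL := basis2_subspace hB.
have pXc0 : pX c <> 0.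
  by move=> e; apply: c0; apply: WY0 => //; have := pX_compl c; rewrite e subr0.
have [al [be [ga [abg_neq0 dep]]]] := basis2_dependent3 hK hB La Lb Lc.
have depX : ga *: pX c + al *: a = 0.
  by move: (congr1 pX dep); rewrite !pXD !pXZ pX_id // pX_eq0 // scaler0 addr0 pX0 addrC.
have [ga0|ga_neq0] := eqVneq ga 0.
  exfalso; move: depX; rewrite ga0 scale0r add0r => /(dr_scaler_eq0_coef hK a0) al0.
  move: dep; rewrite al0 ga0 !scale0r add0r addr0 => /(dr_scaler_eq0_coef hK b0) be0.
  by case: abg_neq0 => [|[]] /eqP; [rewrite al0 | rewrite be0 | rewrite ga0].
set s := - (ga^-1 * al).
have epXc : pX c = s *: a := dr_lincomb_eq0 hK ga_neq0 depX.
have s0 : s != 0 by apply/eqP => s0; apply: pXc0; rewrite epXc s0 scale0r.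
apply: (dr_subspaceZ_inv hK sL s0); rewrite -phiZ -epXc phi_pX -(proj1 (in_W c) Wc).
by apply: subspaceB => //; rewrite epXc; apply: subspaceZ.
Qed.

Lemma std_regulus_point a s t T : X a -> a <> 0 -> std_regulus T ->
  T (s *: a + t *: phi a) -> s *: a + t *: phi a <> 0 ->
  exists x y : K, [/\ centre x, centre y, (x, y) <> (0, 0) &
    forall w, span1 (s *: a + t *: phi a) w <-> span1 (x *: a + y *: phi a) w].
Proof.
move=> Xa a0 [->|[mu hmu ->]] Tv v0.
  have s0 : s = 0.
    apply: (dr_scaler_eq0_coef hK a0).
    by move: (pX_eq0 Tv); rewrite pXD !pXZ pX_phi pX_id // scaler0 addr0.
  have t0 : t != 0 by apply/eqP => t0; apply: v0; rewrite s0 t0 !scale0r addr0.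
  exists 0, 1; split; [exact: centre0 | exact: centre1 | by case=> /eqP; rewrite oner_eq0 |].
  by move=> w; rewrite s0 !scale0r !add0r scale1r; apply: span1Z.
have pXv : pX (s *: a + t *: phi a) = s *: a.
  by rewrite pXD !pXZ pX_phi pX_id // scaler0 addr0.
have phiv : phi (s *: a + t *: phi a) = s *: phi a.
  by rewrite phiD !phiZ phi_phi scaler0 addr0.
have ts : t = s * mu.
  apply: (dr_scaler_inj_coef hK (phi_neq0 Xa a0)).
  by move: Tv; rewrite /G pXv phiv [s *: a + _]addrC addrK scalerA hmu.
have s0 : s != 0 by apply/eqP => s0; apply: v0; rewrite ts s0 mul0r !scale0r addr0.
exists 1, mu; split; [exact: centre1 | done | by case=> /eqP; rewrite oner_eq0 |].
by move=> w; rewrite ts -scalerA -scalerDr scale1r; apply: span1Z.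
Qed.

Lemma std_regulus_through a x y : X a -> centre x -> centre y ->
  exists2 T, std_regulus T & T (x *: a + y *: phi a).
Proof.
move=> Xa hx hy; have [x0|x_neq0] := eqVneq x 0.
  exists Y; first by left.
  by rewrite x0 scale0r add0r; apply: subspaceZ => //; apply: phi_in.
exists (G (x^-1 * y)).
  by right; exists (x^-1 * y) => //; apply: centreM => //; apply: centreV.
have -> : y *: phi a = (x^-1 * y) *: phi (x *: a).
  by rewrite phiZ scalerA -mulrA hy mulrA dr_mulVf // mul1r.
by apply: G_graph; apply: subspaceZ.
Qed.

Lemma std_directrix_Zsubline L : line L -> meet L X -> meet L Y -> meet L W ->
  Zsubline L (fun P => point P /\ subsp P L /\ exists T, std_regulus T /\ subsp P T).
Proof.
move=> [e1 [e2 hB]] [a [a0 [La Xa]]] [b [b0 [Lb Yb]]] [c [c0 [Lc Wc]]].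
have Lphia := line_XYW_phi hB La Lb Lc Xa a0 Yb b0 Wc c0.
have hBa := basis2_of_lin_indep2 hK hB La Lphia (lin_indep2_phi Xa a0).
exists a, (phi a); split => // P; split.
  case=> -[v [v0 Pv]] [PL [T [stdT PT]]].
  have Pv' : P v by apply/Pv; exists 1; rewrite scale1r.
  have Tv := PT v Pv'; have [s [t ev]] := (proj2 hBa v).1 (PL v Pv').
  rewrite ev in v0 Tv; have [x [y [hx hy xy0 span_eq]]] := std_regulus_point Xa a0 stdT Tv v0.
  by exists x, y; split => // w; rewrite Pv ev.
case=> x [y [hx hy xy0 Pspan]]; set v := x *: a + y *: phi a.
have v0 : v <> 0 by move=> /(lin_indep2_phi Xa a0) [x0 y0]; apply: xy0; rewrite x0 y0.
have P_sub Z : subspace Z -> Z v -> subsp P Z by move=> sZ Zv w /Pspan [k ->]; apply: subspaceZ.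
split; first by exists v.
split; first by apply: P_sub; [exact: basis2_subspace hB | apply/(proj2 hBa); exists x, y].
have [T stdT Tv] := std_regulus_through Xa hx hy.
by exists T; split => //; apply: P_sub => //; apply: std_regulus_subspace.
Qed.

Section Dim.
Hypothesis hdim : dim_gt2 V.

Lemma X_neq0 : exists2 a, X a & a <> 0.
Proof.
case: hdim => v [b [c indep]].
have v0 : v <> 0.
  move=> v0; have [/eqP] : (1 : K) = 0 /\ (0 : K) = 0 /\ (0 : K) = 0.
    by case: (indep 1 0 0); rewrite ?v0 ?scaler0 ?scale0r ?addr0.
  by rewrite oner_eq0.
have [pXv0|pXv_neq0] := eqVneq (pX v) 0; last by exists (pX v); [apply: pX_in | apply/eqP].
have [x Xx phix] := phi_surj (pX_compl v); exists x => // x0.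
by apply: v0; move: phix; rewrite x0 phi0 pXv0 subr0.
Qed.

Lemma X_lin_indep2 x : X x -> x <> 0 -> exists2 z, X z & lin_indep2 x z.
Proof.
move=> Xx x0; apply: NNPP => no_indep.
have mult z : X z -> exists k, z = k *: x.
  by move=> Xz; apply: (not_lin_indep2 hK x0) => indep; apply: no_indep; exists z.
have span v : span2 x (phi x) v.
  have [z Xz phiz] := phi_surj (pX_compl v).
  have [k1 e1] := mult _ (pX_in v); have [k2 e2] := mult _ Xz.
  by exists k1, k2; rewrite -e1 -phiZ -e2 phiz -pX_decomp.
have hB : basis2 x (phi x) (span2 x (phi x)) by split => //; apply: lin_indep2_phi.
case: hdim => a [b [c indep]].
have [s [t [u [stu_neq0 e]]]] := basis2_dependent3 hK hB (span a) (span b) (span c).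
have [s0 t0 u0] := indep _ _ _ e.
by case: stu_neq0 => [|[]] /eqP; [rewrite s0 | rewrite t0 | rewrite u0].
Qed.

Section Classify.
Variable T : V -> Prop.
Hypotheses (sT : subspace T) (TY0 : forall v, T v -> Y v -> v = 0).
Hypothesis T_meets : forall x, X x -> x <> 0 -> meet (span2 x (phi x)) T.

Lemma T_Y_unique u y1 y2 : Y y1 -> Y y2 -> T (u + y1) -> T (u + y2) -> y1 = y2.
Proof.
move=> Y1 Y2 T1 T2; apply/subr0_eq/TY0; last exact: subspaceB.
have -> : y1 - y2 = (u + y1) - (u + y2) by rewrite opprD addrACA subrr add0r.
exact: subspaceB.
Qed.

Lemma T_slope_exists x : X x -> x <> 0 -> exists m, T (x + m *: phi x).
Proof.
move=> Xx x0; have [t [t0 [[s [s' et]] Tt]]] := T_meets Xx x0.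
have [s0|s_neq0] := eqVneq s 0.
  case: t0; apply: TY0 => //.
  by rewrite et s0 scale0r add0r; apply: subspaceZ => //; apply: phi_in.
exists (s^-1 * s'); have -> : x + (s^-1 * s') *: phi x = s^-1 *: t.
  by rewrite et scalerDr dr_scalerK // scalerA.
exact: subspaceZ.
Qed.

Lemma T_slope_indep b x m m' : X b -> X x -> lin_indep2 b x ->
  T (b + m *: phi b) -> T (x + m' *: phi x) -> m = m'.
Proof.
move=> Xb Xx indep Tb Tx.
have [ms Tbx] := T_slope_exists (subspaceD sX Xb Xx) (lin_indep2_addr_neq0 indep).
have e : m *: phi b + m' *: phi x = ms *: phi (b + x).
  apply: (T_Y_unique (u := b + x)) Tbx; last by rewrite addrACA; apply: subspaceD.
    by apply: subspaceD => //; apply: subspaceZ => //; apply: phi_in.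
  by apply: subspaceZ => //; apply: phi_in.
have /indep [/eqP] : (m - ms) *: b + (m' - ms) *: x = 0.
  apply: phi_inj; first by apply: subspaceD => //; apply: subspaceZ.
  by rewrite phiD !phiZ !scalerBl addrACA -opprD -scalerDr -phiD -e subrr.
by rewrite subr_eq0 => /eqP -> /eqP; rewrite subr_eq0 => /eqP.
Qed.

Lemma T_slope_const a m : X a -> a <> 0 -> T (a + m *: phi a) ->
  forall x, X x -> T (x + m *: phi x).
Proof.
move=> Xa a0 Ta x Xx.
have [->|x0] := classic (x = 0); first by rewrite phi0 scaler0 addr0; apply: subspace0.
have [m' Tx] := T_slope_exists Xx x0.
have [indep|dep] := classic (lin_indep2 a x); first by rewrite (T_slope_indep Xa Xx indep Ta Tx).
(* x is a multiple of a: compare both slopes with that of a vector z independent of a *)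
have [k ek] := not_lin_indep2 hK a0 dep.
have k0 : k != 0 by apply/eqP => k0; apply: x0; rewrite ek k0 scale0r.
have [z Xz indep_az] := X_lin_indep2 Xa a0.
have [mz Tz] := T_slope_exists Xz (lin_indep2_neq0r indep_az).
have indep_zx : lin_indep2 z x.
  move=> s t e; have [|tk0 s0] := indep_az (t * k) s; first by rewrite -scalerA -ek addrC.
  by split => //; rewrite -[t]mulr1 -(dr_mulfV hK k0) mulrA tk0 mul0r.
by rewrite (T_slope_indep Xa Xz indep_az Ta Tz) (T_slope_indep Xz Xx indep_zx Tz Tx).
Qed.

Lemma T_slope_central a m : X a -> a <> 0 ->
  (forall x, X x -> T (x + m *: phi x)) -> centre m.
Proof.
move=> Xa a0 Tall k; have [->|k0] := eqVneq k 0; first by rewrite mulr0 mul0r.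
have Tka := Tall _ (subspaceZ k sX Xa).
have Tka' : T (k *: a + k *: (m *: phi a)).
  by rewrite -scalerDr; apply: subspaceZ => //; apply: Tall.
have Yphi v (l : K) : Y (l *: phi v) by apply: subspaceZ => //; apply: phi_in.
have := T_Y_unique (Yphi _ _) (subspaceZ k sY (Yphi _ _)) Tka Tka'.
by rewrite phiZ !scalerA => /(dr_scaler_inj_coef hK (phi_neq0 Xa a0)).
Qed.

Lemma T_eq_G : exists2 mu, centre mu & T = G mu.
Proof.
have [a Xa a0] := X_neq0; have [m Ta] := T_slope_exists Xa a0.
have Tall := T_slope_const Xa a0 Ta.
exists m; first exact: T_slope_central Xa a0 Tall.
apply: functional_extensionality => v; apply: propositional_extensionality.
split => [Tv | Gv]; last by rewrite (G_decomp Gv); apply/Tall/pX_in.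
have /subr0_eq ev : v - (pX v + m *: phi (pX v)) = 0.
  apply: TY0; first by apply: subspaceB => //; apply/Tall/pX_in.
  rewrite opprD addrA; apply: subspaceB => //; first exact: pX_compl.
  by apply: subspaceZ => //; apply: phi_in.
by rewrite /G {1}ev addrAC subrr add0r phi_pX.
Qed.

End Classify.

Section Regulus.
Variable R : (V -> Prop) -> Prop.
Hypotheses (R_inG : forall T, R T -> inG T)
  (R_distant : forall T1 T2, R T1 -> R T2 -> T1 <> T2 -> distant T1 T2)
  (R_R2 : R2 R)
  (R_max : forall S : (V -> Prop) -> Prop, (forall T, S T -> inG T) -> R1 S -> R2 S ->
     (forall T, R T -> S T) -> forall T, S T -> R T).
Hypotheses (RX : R X) (RY : R Y) (RW : R W) (nXY : X <> Y) (nXW : X <> W) (nYW : Y <> W).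

Lemma regulus_std T : R T -> std_regulus T.
Proof.
move=> RT; have [->|nTY] := classic (T = Y); first by left.
have sT : subspace T by case: (R_inG RT).
have [TY0 _] := R_distant RT RY nTY.
have T_meets x : X x -> x <> 0 -> meet (span2 x (phi x)) T.
  move=> Xx x0; have [mX mY mW] := span2_phi_meets Xx x0.
  apply: (R_R2 _ _ RT); first by exists x, (phi x); split => //; apply: lin_indep2_phi.
  by exists X, Y, W; split.
by right; apply: T_eq_G sT TY0 T_meets.
Qed.

Lemma std_regulus_in T : std_regulus T -> R T.
Proof.
apply: (R_max (S := std_regulus)); last exact: regulus_std.
- by move=> T' [->|[mu hmu ->]]; [exact: R_inG | exact: G_inG (R_inG RX)].
- split; first exact: std_regulus_distant.
  by exists X, Y, W; split => //; apply: regulus_std.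
- exact: std_regulus_R2.
Qed.

Lemma regulus_eq_std : R = std_regulus.
Proof.
apply: functional_extensionality => T; apply: propositional_extensionality.
by split; [apply: regulus_std | apply: std_regulus_in].
Qed.

Lemma regulus_directrix_Zsubline L : directrix R L ->
  Zsubline L (fun P => point P /\ subsp P L /\ exists T, R T /\ subsp P T).
Proof.
case=> line_L L_meets; rewrite regulus_eq_std.
exact: std_directrix_Zsubline line_L (L_meets _ RX) (L_meets _ RY) (L_meets _ RW).
Qed.

End Regulus.
End Dim.

End Frame.

Theorem corollary4p7 (K : unitRingType) (V : lmodType K)
  (hK : division_ring K) (hdim : dim_gt2 V) (hG : exists X : V -> Prop, inG X)
  (R : (V -> Prop) -> Prop) (hR : Zregulus R)
  (L : V -> Prop) (hL : directrix R L) :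
  Zsubline L (fun P : V -> Prop =>
    point P /\ subsp P L /\ exists X, R X /\ subsp P X).
Proof.
case: hR => R_inG [[R_distant [X [Y [W [RX RY RW [nXY [nXW nYW]]]]]]] [R_R2 R_max]].
have sub T : R T -> subspace T by case/R_inG.
have [XY0 XY] := R_distant X Y RX RY nXY.
have [WY0 WY] := R_distant W Y RW RY (nesym nYW).
have dWX := R_distant W X RW RX (nesym nXW).
have [pX pX_spec] : exists pX : V -> V, forall v, X (pX v) /\ Y (v - pX v).
  apply: (choice (fun v x => X x /\ Y (v - x))) => v; have [x [y [Xx [Yy ->]]]] := XY v.
  by exists x; rewrite [x + y]addrC addrK.
have [phi phi_spec] : exists phi : V -> V, forall v, Y (phi v) /\ W (pX v + phi v).
  apply: (choice (fun v y => Y y /\ W (pX v + y))) => v.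
  have [w [y [Ww [Yy e]]]] := WY (pX v).
  by exists (- y); split; [apply: subspaceN (sub _ RY) _ | rewrite e addrK].
exact: (regulus_directrix_Zsubline hK (sub _ RX) (sub _ RY) (sub _ RW) XY0 WY0 dWX
  pX_spec phi_spec hdim R_inG R_distant R_R2 R_max RX RY RW nXY nXW nYW hL).
Qed.
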